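(* Let $N\ge 2$, $1\le Q<N$, $P\in\mathbb{C}^{N\times Q}$, let $x=(x_1,\dots,x_N)^T\in\mathbb{C}^N$ with $x_2,\dots,x_{Q+1}$ nonzero, $X=\mathrm{diag}(x)$, and let $S\in\mathbb{C}^{Q\times Q}$ be invertible with entries $S_{mq}$. Let $\mathcal{J}=\{1,\dots,N\}\cup\bigcup_{m=2}^{Q}\{(m-1)N+1,\dots,(m-1)N+Q+1\}$ and let $\tilde P=P_{\{1,\dots,Q+1\},:}$. Then $$\Big|\det\big[\,[I_Q\otimes XP]_{\mathcal{J},:}\ \ [(S\otimes I_N)D(P)]_{\mathcal{J},\{2,\dots,N\}}\,\big]\Big| =\prod_{j=Q+2}^{N}\Big|\sum_{q=1}^{Q}S_{1q}P_{jq}\Big|\ \prod_{k=1}^{5}|\det M_k|,$$ where $\tilde X=\mathrm{diag}(x_1,\dots,x_{Q+1})$ and $M_1=I_Q\otimes\tilde X$, $M_2=S\otimes I_{Q+1}$, $M_3=\big[\,I_Q\otimes\tilde P\ \ [D(\tilde P)]_{:,\{2,\dots,Q+1\}}\,\big]$, $M_4=\begin{bmatrix}S^{-1}\otimes I_Q&0\\0&I_Q\end{bmatrix}$, $M_5=\begin{bmatrix}I_{Q^2}&0\\0&\mathrm{diag}(x_2,\dots,x_{Q+1})^{-1}\end{bmatrix}$.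
   Context: For a $K\times L$ matrix $B$ with entries $b_{ij}$, $D(B)$ denotes the $KL\times K$ matrix obtained by stacking vertically $\mathrm{diag}(b_{11},\dots,b_{K1}),\dots,\mathrm{diag}(b_{1L},\dots,b_{KL})$. For a matrix $B$ and index sets $\mathcal{I},\mathcal{S}$, $[B]_{\mathcal{I},\mathcal{S}}$ is the submatrix with rows in $\mathcal{I}$ and columns in $\mathcal{S}$; '':'' means all rows/columns. $\otimes$ is the Kronecker product, with ordinary matrix products taking precedence over it (e.g. $I_Q\otimes XP=I_Q\otimes(XP)$). The matrix on the left is square of size $N-1+Q^2$. *)

From HB Require Import structures.
From mathcomp Require Import all_boot all_order all_algebra.
Set Implicit Arguments. Unset Strict Implicit. Unset Printing Implicit Defensive.
Import Order.TTheory GRing.Theory Num.Theory.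
Local Open Scope ring_scope.

Section Defs.
Variable R : pzRingType.

(* entry (i,j) of A, 0-based nat indices, 0 if out of range *)
Definition mget m n (A : 'M[R]_(m, n)) (i j : nat) : R :=
  oapp (fun i' : 'I_m => oapp (fun j' : 'I_n => A i' j') 0 (insub j)) 0 (insub i).

Definition kron m n p q (A : 'M[R]_(m, n)) (B : 'M[R]_(p, q)) : 'M[R]_(m * p, n * q) :=
  \matrix_(i, j) (mget A (i %/ p)%N (j %/ q)%N * mget B (i %% p)%N (j %% q)%N).

(* D(B) for B : K x L : stack vertically diag(b_{1l},...,b_{Kl}), l = 1..L *)
Definition Dmx K L (B : 'M[R]_(K, L)) : 'M[R]_(L * K, K) :=
  \matrix_(r, c) (if ((r %% K)%N == c :> nat) then mget B (r %% K)%N (r %/ K)%N else 0).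

Definition rowsel m n p (f : nat -> nat) (A : 'M[R]_(m, n)) : 'M[R]_(p, n) :=
  \matrix_(i, j) mget A (f i) j.

End Defs.

Lemma shift1_proof (n : nat) (j : 'I_n.-1) : (j.+1 < n)%N.
Proof. by case: n j => [[]|n] //= [j Hj]. Qed.

(* j |-> j+1 : indexes columns {2,...,n} (1-based) of an n-column matrix *)
Definition shift1 (n : nat) (j : 'I_n.-1) : 'I_n := Ordinal (shift1_proof j).

(* 0-based enumeration (increasing) of the index set
   J = {1..N} U U_{m=2}^Q {(m-1)N+1, ..., (m-1)N+Q+1}  (1-based) *)
Definition Jidx (N Q : nat) (r : nat) : nat :=
  if (r < N)%N then r
  else let t := (r - N)%N in ((t %/ Q.+1).+1 * N + t %% Q.+1)%N.

Arguments rowsel {R m n p} f A.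
Arguments kron {R m n p q} A B.
Arguments Dmx {R K L} B.
Arguments mget {R m n} A i j.

(* Reorder the rows of the minor: first the Q+1 leading rows of each of the Q diagonal
   blocks, then the remaining rows of the first block.  The result is block lower
   triangular: D(P) is diagonal inside each block and a leading row has offset at most Q,
   so these rows vanish in the last N-Q-1 columns.  The lower-right block is diagonal with
   entries sum_q S_1q P_jq (j > Q+1), as only the first block row of S (x) I_N reaches the
   remaining rows.  Scaling the last Q columns of the upper-left block by x_2, ..., x_(Q+1)
   turns it into (I_Q (x) Xt) [I_Q (x) Pt, ((S (x) I_(Q+1)) D(Pt))_(:,2..Q+1)], which is
   M1 M2 M3 M4 by the mixed-product rule for Kronecker products. *)

From HB Require Import structures.
From mathcomp Require Import all_boot all_order all_algebra all_fingroup zify.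
Import Order.TTheory GRing.Theory Num.Theory.
Set Implicit Arguments. Unset Strict Implicit. Unset Printing Implicit Defensive.
Local Open Scope ring_scope.

Section MatrixEntries.
Variable R : pzRingType.

Lemma mget_ord m n (A : 'M[R]_(m, n)) i j (hi : (i < m)%N) (hj : (j < n)%N) :
  mget A i j = A (Ordinal hi) (Ordinal hj).
Proof.
rewrite /mget (@insubT _ (fun k => k < m)%N 'I_m i hi) /=.
by rewrite (@insubT _ (fun k => k < n)%N 'I_n j hj).
Qed.

Lemma mget1mx n i j : (i < n)%N -> (j < n)%N -> mget (1%:M : 'M[R]_n) i j = (i == j)%:R.
Proof. by move=> hi hj; rewrite (mget_ord _ hi hj) mxE. Qed.

Lemma mget_kron m n p q (A : 'M[R]_(m, n)) (B : 'M[R]_(p, q)) r c :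
  (r < m * p)%N -> (c < n * q)%N ->
  mget (kron A B) r c = mget A (r %/ p) (c %/ q) * mget B (r %% p) (c %% q).
Proof. by move=> hr hc; rewrite (mget_ord _ hr hc) mxE. Qed.

Lemma mget_colsub_shift1 m n (A : 'M[R]_(m, n)) r c :
  (c < n.-1)%N -> mget (colsub (@shift1 n) A) r c = mget A r c.+1.
Proof.
move=> hc; rewrite /mget; case: (@insub _ _ 'I_m r) => [r'|] //=.
rewrite (@insubT _ (fun k => k < n.-1)%N 'I_n.-1 c hc) /= mxE.
by rewrite (@insubT _ (fun k => k < n)%N 'I_n c.+1 (shift1_proof (Ordinal hc))).
Qed.

Lemma castmx_diag_mx n n' (e : n = n') (d : 'rV[R]_n) :
  castmx (e, e) (diag_mx d) = diag_mx (castmx (erefl, e) d).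
Proof. by case: n' / e; rewrite !castmx_id. Qed.

Lemma mget_rowsel m n p f (A : 'M[R]_(m, n)) a b :
  (a < p)%N -> mget (rowsel (p := p) f A) a b = mget A (f a) b.
Proof.
move=> ha; rewrite {1}/mget (@insubT _ (fun k => k < p)%N 'I_p a ha) /=.
case: insubP => [b' _ <-|hb] /=; first by rewrite mxE.
by rewrite /mget; case: (@insub _ _ 'I_m (f a)) => [a'|] //=; rewrite insubN.
Qed.

Lemma castmx_mulmx n n' p (e : n = n') (A : 'M[R]_n) (B : 'M[R]_(n, p)) :
  castmx (e, e) A *m castmx (e, erefl) B = castmx (e, erefl) (A *m B).
Proof. by case: n' / e; rewrite !castmx_id. Qed.

Lemma castmx_mull n n' p q (e : n = n') (A : 'M[R]_(n, p)) (B : 'M[R]_(p, q)) :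
  castmx (e, erefl) A *m B = castmx (e, erefl) (A *m B).
Proof. by case: n' / e; rewrite !castmx_id. Qed.

Lemma mget_diag_mulmx m n (d : 'cV[R]_m) (A : 'M[R]_(m, n)) a b :
  (a < m)%N -> (b < n)%N -> mget (diag_mx d^T *m A) a b = mget d a 0 * mget A a b.
Proof.
move=> ha hb; rewrite (mget_ord _ ha hb) (mget_ord d ha (ltn0Sn 0)) (mget_ord A ha hb).
by rewrite mul_diag_mx !mxE.
Qed.

Lemma kron1mx_diag_mx q p (d : 'rV[R]_p) :
  kron (1%:M : 'M[R]_q) (diag_mx d) = diag_mx (\row_(i < q * p) mget d 0 (i %% p)).
Proof.
apply/matrixP => i j; rewrite !mxE.
have hp : (0 < p)%N by case: p {d j} i => [|//] [i]; rewrite muln0.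
have [hi1 hj1] : (i %/ p < q)%N /\ (j %/ p < q)%N by rewrite !ltn_divLR.
have [hi2 hj2] : (i %% p < p)%N /\ (j %% p < p)%N by rewrite !ltn_mod.
rewrite (mget1mx hi1 hj1) (mget_ord _ hi2 hj2) (mget_ord d (ltn0Sn 0) hi2) !mxE /=.
rewrite -[Ordinal hi2 == _]/((i %% p)%N == (j %% p)%N).
have [ediv|ndiv] := eqVneq (i %/ p)%N (j %/ p)%N; last first.
  rewrite mul0r (_ : i == j = false) ?mulr0n //.
  by apply/negbTE; apply: contraNneq ndiv => ->.
have [emod|nmod] := eqVneq (i %% p)%N (j %% p)%N; last first.
  rewrite mulr0n mulr0 (_ : i == j = false) ?mulr0n //.
  by apply/negbTE; apply: contraNneq nmod => ->.
have -> : i == j by apply/eqP/val_inj; rewrite /= (divn_eq i p) (divn_eq j p) ediv emod.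
by rewrite mul1r.
Qed.

End MatrixEntries.

Lemma big_ord_divmod (V : nmodType) n q (F : nat -> nat -> V) :
  \sum_(k < n * q) F (k %/ q)%N (k %% q)%N = \sum_(a < n) \sum_(b < q) F a b.
Proof.
case: q => [|q]; first by rewrite muln0 big_ord0 big1 // => a _; rewrite big_ord0.
elim: n => [|n IH]; first by rewrite mul0n !big_ord0.
rewrite [RHS]big_ord_recr /= -IH mulSnr.
rewrite -!(big_mkord xpredT (fun k => F (k %/ q.+1)%N (k %% q.+1)%N)).
rewrite (big_cat_nat _ (leq_addr _ _)) //=; congr (_ + _).
rewrite -{1}[(n * q.+1)%N]add0n big_addn addKn big_mkord; apply: eq_bigr => i _.
by rewrite (addnC i) divnMDl // modnMDl divn_small // addn0 modn_small.
Qed.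

Section KronProduct.
Variable R : comPzRingType.

Lemma kron_mulmx m n p q r s (A : 'M[R]_(m, n)) (B : 'M[R]_(p, q))
  (C : 'M[R]_(n, r)) (D : 'M[R]_(q, s)) :
  kron A B *m kron C D = kron (A *m C) (B *m D).
Proof.
apply/matrixP => i j; rewrite !mxE.
have hp : (0 < p)%N by case: p {B D} i => [|//] [i]; rewrite muln0.
have hs : (0 < s)%N by case: s {D} j => [|//] [j]; rewrite muln0.
have hi1 : (i %/ p < m)%N by rewrite ltn_divLR.
have hj1 : (j %/ s < r)%N by rewrite ltn_divLR.
have hi2 : (i %% p < p)%N by rewrite ltn_mod.
have hj2 : (j %% s < s)%N by rewrite ltn_mod.
under eq_bigr do rewrite !mxE.
rewrite (@big_ord_divmod _ _ _ (fun a b => mget A (i %/ p) a * mget B (i %% p) b *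
                                       (mget C a (j %/ s) * mget D b (j %% s)))).
rewrite (mget_ord _ hi1 hj1) (mget_ord _ hi2 hj2) !mxE big_distrl /=.
apply: eq_bigr => a _; rewrite big_distrr /=; apply: eq_bigr => b _.
rewrite (mget_ord A hi1 (ltn_ord a)) (mget_ord B hi2 (ltn_ord b)).
rewrite (mget_ord C (ltn_ord a) hj1) (mget_ord D (ltn_ord b) hj2).
by rewrite mulrACA; congr (_ * _ * (_ * _)); congr (_ _ _); apply/val_inj.
Qed.

Lemma kron_scalar1_Dmx_entry Q M (S : 'M[R]_Q) (P : 'M[R]_(M, Q))
    (i : 'I_(Q * M)) (c : 'I_M) :
  (kron S 1%:M *m Dmx P) i c =
  if (i %% M)%N == c then \sum_(q < Q) mget S (i %/ M) q * mget P (i %% M) q else 0.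
Proof.
have hi : (i %% M < M)%N by rewrite ltn_mod; case: (M) c => [[]|].
rewrite !mxE; under eq_bigr do rewrite !mxE.
rewrite (@big_ord_divmod _ _ _ (fun a b => mget S (i %/ M) a * mget 1%:M (i %% M) b *
                                       (if b == c :> nat then mget P b a else 0))).
under eq_bigr => a _.
  rewrite (bigD1 c) //= eqxx big1 => [|b hb]; last by rewrite ifN ?mulr0.
  rewrite addr0 (mget1mx _ hi (ltn_ord c)).
over.
case: eqP => [->|_]; last by rewrite big1 // => a _; rewrite mulr0 mul0r.
by apply: eq_bigr => a _; rewrite mulr1.
Qed.

Lemma mget_kron_scalar1_Dmx Q M (S : 'M[R]_Q) (P : 'M[R]_(M, Q)) r c :
  (r < Q * M)%N -> (c < M)%N ->
  mget (kron S 1%:M *m Dmx P) r c =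
  if (r %% M)%N == c then \sum_(q < Q) mget S (r %/ M) q * mget P (r %% M) q else 0.
Proof. by move=> hr hc; rewrite (mget_ord _ hr hc) kron_scalar1_Dmx_entry. Qed.

Lemma det_castmx n m (e : n = m) (A : 'M[R]_n) : \det (castmx (e, e) A) = \det A.
Proof. by case: m / e; rewrite castmx_id. Qed.

End KronProduct.

Lemma normr_det_row_perm_lblock (C : numDomainType) k m n (e : k = (m + n)%N)
    (s : 'S_k) (A : 'M[C]_k) :
  ursubmx (castmx (e, e) (row_perm s A)) = 0 ->
  `|\det A| = `|\det (ulsubmx (castmx (e, e) (row_perm s A)))|
              * `|\det (drsubmx (castmx (e, e) (row_perm s A)))|.
Proof.
set B := castmx _ _; move=> hur.
rewrite -normrM -(det_lblock _ (dlsubmx B)) -hur submxK det_castmx.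
by rewrite row_permE det_mulmx det_perm normrM normrX normrN1 expr1n mul1r.
Qed.

Section KroneckerMinor.
Variables (C : numClosedFieldType) (N Q : nat).
Hypotheses (HQ1 : (1 <= Q)%N) (HQN : (Q < N)%N).
Variables (P : 'M[C]_(N, Q)) (x : 'cV[C]_N) (S : 'M[C]_Q).

Local Notation sizeA := (Q * Q + N.-1)%N.
Local Notation sizeH := (Q * Q + Q)%N.
Local Notation Y := (kron S (1%:M : 'M[C]_N) *m Dmx P).
Local Notation A := (row_mx (rowsel (Jidx N Q) (kron (1%:M : 'M[C]_Q) (diag_mx x^T *m P)))
                            (rowsel (Jidx N Q) (colsub (@shift1 N) Y)) : 'M[C]_sizeA).

(* Row [i] of the reordered matrix is row [Jreorder i] of [A] (rows of [A] are numbered by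
   their position in J, from 0): first the [Q+1] leading rows of each of the [Q] diagonal
   blocks, then the remaining rows [Q+1, ..., N-1] of the first one. *)
Definition Jreorder (i : nat) : nat :=
  if (i < sizeH)%N then (if (i < Q.+1)%N then i else N + (i - Q.+1))%N
  else (i - sizeH + Q.+1)%N.

Lemma Jreorder_lt i : (i < sizeA)%N -> (Jreorder i < sizeA)%N.
Proof. by rewrite /Jreorder => hi; do 2?case: ifP => ?; lia. Qed.

Lemma Jreorder_inj : {in gtn sizeA &, injective Jreorder}.
Proof.
move=> i j /[!inE] hi hj; rewrite /Jreorder.
by do 2?case: ifP => ?; do 2?case: ifP => ?; lia.
Qed.

Definition Jreorder_ord (i : 'I_sizeA) : 'I_sizeA := Ordinal (Jreorder_lt (ltn_ord i)).

Lemma Jreorder_ord_inj : injective Jreorder_ord.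
Proof. by move=> i j /(congr1 val) /Jreorder_inj eij; apply/val_inj/eij; rewrite inE. Qed.

Definition Jperm : 'S_sizeA := perm Jreorder_ord_inj.

Lemma JpermE i : val (Jperm i) = Jreorder i.
Proof. by rewrite permE. Qed.

Lemma Jidx_Jreorder_head i : (i < sizeH)%N ->
  Jidx N Q (Jreorder i) = (i %/ Q.+1 * N + i %% Q.+1)%N.
Proof.
move=> hi; rewrite /Jreorder hi /Jidx; case: (ltnP i Q.+1) => hiQ.
  by rewrite (leq_trans hiQ HQN) divn_small // modn_small.
rewrite ltnNge leq_addr /= addKn.
have ei : i = (1 * Q.+1 + (i - Q.+1))%N by rewrite mul1n subnKC.
by rewrite [in RHS]ei divnMDl // modnMDl add1n.
Qed.

Lemma Jidx_Jreorder_tail j : (j < N - Q.+1)%N ->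
  Jidx N Q (Jreorder (sizeH + j)) = (j + Q.+1)%N.
Proof.
move=> hj; rewrite /Jreorder ltnNge leq_addr /= addKn /Jidx.
by have -> : (j + Q.+1 < N)%N by lia.
Qed.

Lemma head_block_lt i : (i < sizeH)%N -> (i %/ Q.+1 < Q)%N.
Proof. by move=> hi; rewrite ltn_divLR // mulnSr. Qed.

Lemma head_offset_lt i : (i %% Q.+1 < N)%N.
Proof. exact: leq_trans (ltn_pmod i (ltn0Sn Q)) HQN. Qed.

Lemma head_row_lt i : (i < sizeH)%N -> (i %/ Q.+1 * N + i %% Q.+1 < Q * N)%N.
Proof.
move=> hi; apply: leq_trans (leq_mul (head_block_lt hi) (leqnn N)).
by rewrite mulSnr ltn_add2l head_offset_lt.
Qed.

Lemma head_row_divn i : ((i %/ Q.+1 * N + i %% Q.+1) %/ N = i %/ Q.+1)%N.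
Proof. by rewrite divnMDl ?(divn_small (head_offset_lt i)) ?addn0 //; lia. Qed.

Lemma head_row_modn i : ((i %/ Q.+1 * N + i %% Q.+1) %% N = i %% Q.+1)%N.
Proof. by rewrite modnMDl modn_small ?head_offset_lt. Qed.

Lemma A_entry (r c : 'I_sizeA) : A r c =
  if (c < Q * Q)%N then mget (kron (1%:M : 'M_Q) (diag_mx x^T *m P)) (Jidx N Q r) c
  else mget Y (Jidx N Q r) (c - Q * Q).+1.
Proof.
rewrite mxE; case: splitP => [c' ->|c' ->]; rewrite mxE //.
by rewrite addKn mget_colsub_shift1.
Qed.

Lemma sizeA_split : sizeA = (sizeH + (N - Q.+1))%N.
Proof. lia. Qed.

Local Notation B := (castmx (sizeA_split, sizeA_split) (row_perm Jperm A)).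

Lemma B_entry i j :
  B i j = A (Jperm (cast_ord (esym sizeA_split) i)) (cast_ord (esym sizeA_split) j).
Proof. by rewrite castmxE mxE. Qed.

Lemma ursubmx_B : ursubmx B = 0.
Proof.
apply/matrixP => i j; rewrite !mxE B_entry A_entry /= JpermE.
rewrite ltnNge -addnA leq_addr /= Jidx_Jreorder_head // addKn.
have hj : ((Q + j).+1 < N)%N by have := ltn_ord j; lia.
rewrite mget_kron_scalar1_Dmx ?head_row_lt // head_row_modn ifN //.
by rewrite neq_ltn (leq_trans (ltn_pmod i (ltn0Sn Q))) // ltnS leq_addr.
Qed.

Lemma drsubmx_B :
  drsubmx B = diag_mx (\row_(j < N - Q.+1) \sum_(q < Q) mget S 0 q * mget P (j + Q.+1) q).
Proof.
apply/matrixP => i j; rewrite !mxE B_entry A_entry /= JpermE.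
rewrite ltnNge -addnA leq_addr /= Jidx_Jreorder_tail // addKn.
have hi : (i + Q.+1 < N)%N by have := ltn_ord i; lia.
have hj : ((Q + j).+1 < N)%N by have := ltn_ord j; lia.
rewrite mget_kron_scalar1_Dmx ?(leq_trans hi) ?leq_pmull //.
by rewrite modn_small // divn_small // addnS addnC eqSS eqn_add2l mulrb.
Qed.

Lemma ulsubmx_B_entry (i j : 'I_sizeH) : ulsubmx B i j =
  if (j < Q * Q)%N
  then ((i %/ Q.+1)%N == (j %/ Q)%N)%:R * (mget x (i %% Q.+1) 0 * mget P (i %% Q.+1) (j %% Q))
  else if (i %% Q.+1 == (j - Q * Q).+1)%N
       then \sum_(q < Q) mget S (i %/ Q.+1) q * mget P (i %% Q.+1) q else 0.
Proof.
have hi := ltn_ord i.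
rewrite !mxE B_entry A_entry JpermE /= Jidx_Jreorder_head //; case: ifP => hjQ.
  have hjd : (j %/ Q < Q)%N by rewrite ltn_divLR.
  have hjm : (j %% Q < Q)%N by rewrite ltn_mod.
  rewrite mget_kron ?head_row_lt // head_row_divn head_row_modn.
  by rewrite (mget1mx _ (head_block_lt hi) hjd) mget_diag_mulmx ?head_offset_lt.
have hjN : ((j - Q * Q).+1 < N)%N by move: hjQ; have := ltn_ord j; lia.
by rewrite mget_kron_scalar1_Dmx ?head_row_lt // head_row_divn head_row_modn.
Qed.

Local Notation Pt := (rowsel (p := Q.+1) id P).
Local Notation Xt := (diag_mx (\row_(i < Q.+1) mget x i 0)).
Local Notation M1 := (kron (1%:M : 'M[C]_Q) Xt).
Local Notation M2 := (kron S (1%:M : 'M[C]_Q.+1)).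
Local Notation M3 := (castmx (mulnSr Q Q, erefl)
      (row_mx (kron (1%:M : 'M[C]_Q) Pt) (colsub (@shift1 Q.+1) (Dmx Pt))) : 'M[C]_sizeH).
Local Notation M4 := (block_mx (kron (invmx S) (1%:M : 'M[C]_Q)) 0 0 (1%:M : 'M[C]_Q)
                      : 'M[C]_sizeH).
Local Notation dx := (\row_(i < Q) mget x i.+1 0).
Local Notation M5 := (block_mx (1%:M : 'M[C]_(Q * Q)) 0 0 (invmx (diag_mx dx)) : 'M[C]_sizeH).
Local Notation cast2 := (castmx (mulnSr Q Q, mulnSr Q Q)).

Lemma castmx_M1 : cast2 M1 = diag_mx (\row_(i < sizeH) mget x (i %% Q.+1) 0).
Proof.
rewrite kron1mx_diag_mx castmx_diag_mx; congr diag_mx; apply/rowP => i.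
rewrite castmxE !mxE /= (mget_ord _ (ltn0Sn 0) (ltn_pmod _ (ltn0Sn Q))) mxE.
by rewrite (mget_ord x (head_offset_lt i) (ltn0Sn 0)).
Qed.

Hypothesis hS : S \in unitmx.

Lemma mulmx_M2_M3_M4 : cast2 M2 *m M3 *m M4 = castmx (mulnSr Q Q, erefl)
    (row_mx (kron (1%:M : 'M[C]_Q) Pt) (colsub (@shift1 Q.+1) (kron S 1%:M *m Dmx Pt))).
Proof.
rewrite castmx_mulmx castmx_mull; congr castmx.
rewrite mul_mx_row mul_row_block !mulmx0 addr0 add0r mulmx1 mulmx_colsub !kron_mulmx.
by rewrite mulmx1 mul1mx mulmxV // mulmx1.
Qed.

Hypothesis hx : forall i : 'I_N, (1 <= i <= Q)%N -> x i 0 != 0.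

Lemma diag_mulmx_M5 : diag_mx (row_mx (const_mx 1) dx) *m M5 = 1%:M.
Proof.
have dx_unit : diag_mx dx \in unitmx.
  rewrite unitmxE det_diag unitfE; apply/prodf_neq0 => c _; rewrite mxE.
  have hc : (c.+1 < N)%N := leq_ltn_trans (ltn_ord c) HQN.
  by rewrite (mget_ord x hc (ltn0Sn 0)); apply: hx => /=; rewrite ltn_ord.
rewrite diag_mx_row mulmx_block !mulmx0 !mul0mx !addr0 !add0r diag_const_mx mulmx1.
by rewrite mulmxV // -scalar_mx_block.
Qed.

Lemma ulsubmx_B_mul_diag :
  ulsubmx B *m diag_mx (row_mx (const_mx 1) dx) = cast2 M1 *m (cast2 M2 *m M3 *m M4).
Proof.
rewrite mulmx_M2_M3_M4 castmx_M1 mul_mx_diag [RHS]mul_diag_mx; apply/matrixP => i j.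
rewrite mxE ulsubmx_B_entry [RHS]mxE castmxE /= !mxE cast_ord_id.
have hb := head_block_lt (ltn_ord i).
case: splitP => [c /= ->|c /= ->].
  rewrite !mxE mget_rowsel ?ltn_pmod // (mget1mx _ hb); last by rewrite ltn_divLR.
  by rewrite mulr1 mulrCA.
rewrite addKn [colsub _ _ _ _]mxE kron_scalar1_Dmx_entry !mxE /=.
case: eqP => [->|_]; last by rewrite mul0r mulr0.
rewrite mulrC; congr (_ * _); apply: eq_bigr => q _.
by rewrite mget_rowsel // ltnS.
Qed.

Lemma ulsubmx_B_factor : ulsubmx B = cast2 M1 *m cast2 M2 *m M3 *m M4 *m M5.
Proof.
by rewrite -[ulsubmx B]mulmx1 -diag_mulmx_M5 mulmxA ulsubmx_B_mul_diag !mulmxA.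
Qed.

End KroneckerMinor.

Theorem mainTheorem5 (C : numClosedFieldType) (N Q : nat)
  (HN : (2 <= N)%N) (HQ1 : (1 <= Q)%N) (HQN : (Q < N)%N)
  (P : 'M[C]_(N, Q)) (x : 'cV[C]_N)
  (hx : forall i : 'I_N, (1 <= i <= Q)%N -> x i 0 != 0)
  (S : 'M[C]_Q) (hS : S \in unitmx) :
  let X := diag_mx x^T in
  let A : 'M[C]_(Q * Q + N.-1) :=
    row_mx (rowsel (Jidx N Q) (kron (1%:M : 'M[C]_Q) (X *m P)))
           (rowsel (Jidx N Q)
              (colsub (@shift1 N) (kron S (1%:M : 'M[C]_N) *m Dmx P))) in
  let Pt : 'M[C]_(Q.+1, Q) := rowsel id P in
  let Xt : 'M[C]_Q.+1 := diag_mx (\row_(i < Q.+1) mget x i 0) in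
  let M1 := kron (1%:M : 'M[C]_Q) Xt in
  let M2 := kron S (1%:M : 'M[C]_Q.+1) in
  let M3 : 'M[C]_(Q * Q + Q) :=
    castmx (mulnSr Q Q, erefl)
      (row_mx (kron (1%:M : 'M[C]_Q) Pt) (colsub (@shift1 Q.+1) (Dmx Pt))) in
  let M4 : 'M[C]_(Q * Q + Q) :=
    block_mx (kron (invmx S) (1%:M : 'M[C]_Q)) 0 0 (1%:M : 'M[C]_Q) in
  let M5 : 'M[C]_(Q * Q + Q) :=
    block_mx (1%:M : 'M[C]_(Q * Q)) 0 0
      (invmx (diag_mx (\row_(i < Q) mget x i.+1 0))) in
  `|\det A| =
    (\prod_(Q.+1 <= j < N) `|\sum_(q < Q) mget S 0 q * mget P j q|)
    * (`|\det M1| * `|\det M2| * `|\det M3| * `|\det M4| * `|\det M5|).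
Proof.
move=> X A Pt Xt M1 M2 M3 M4 M5.
rewrite (normr_det_row_perm_lblock (ursubmx_B HQ1 HQN P x S)).
rewrite (ulsubmx_B_factor HQ1 HQN P hS hx) drsubmx_B det_diag.
rewrite !det_mulmx !det_castmx !normrM normr_prod mulrC; congr (_ * _).
by rewrite (big_addn 0 N Q.+1) big_mkord; apply: eq_bigr => i _; rewrite mxE.
Qed.
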